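(* Let $X$ be the subshift obtained from the marker construction described in the context. For each $x \in X$ and each $j \in \mathbb{N}$ there is a unique decomposition of $x$ into $\mathcal{C}_j$-words, i.e., there is a unique $r \in \{0,1,\dots,l_j-1\}$ such that $x_{[r+kl_j,\, r+(k+1)l_j)} \in \mathcal{C}_j$ for all $k \in \mathbb{Z}$.
   Context: Marker construction. Let $l_1$ be a sufficiently large perfect square and $N_1 = 2^{\sqrt{l_1}}$. Let $\mathcal{C}_1$ be a set of $N_1$ binary words of length $l_1$, each beginning with $001$, such that the word $00$ occurs in each element of $\mathcal{C}_1$ only as its prefix. Inductively, given a set $\mathcal{C}_j$ of $N_j$ distinct words of length $l_j$ with an ordering $\mathcal{C}_j = \{u_1^{(j)},\dots,u_{N_j}^{(j)}\}$, let $P_j = \{2\}\cup\{i^2 : 2 \le i \le \lfloor\sqrt{N_j}\rfloor\}$, and let $\mathcal{C}_{j+1}$ be the set of all words $u^{(j)}_{\pi(1)}u^{(j)}_{\pi(2)}\cdots u^{(j)}_{\pi(N_j)}$ where $\pi$ ranges over permutations of $\{1,\dots,N_j\}$ fixing every element outside $P_j$. Thus $N_{j+1} = (\lfloor\sqrt{N_j}\rfloor)!$ and $l_{j+1} = l_j N_j$. The ordering of $\mathcal{C}_{j+1}$ is arbitrary except that its first element $u^{(j+1)}_1$ is $u_1^{(j)}u_2^{(j)}\cdots u_{N_j}^{(j)}$. $X \subset \{0,1\}^{\mathbb{Z}}$ is the set of bi-infinite sequences each finite subword of which is a subword of some word in $\bigcup_j \mathcal{C}_j$. *)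

From mathcomp Require Import all_boot all_order all_algebra all_fingroup.
Set Implicit Arguments. Unset Strict Implicit. Unset Printing Implicit Defensive.
Import GRing.Theory Num.Theory.

Definition word := seq bool.

Definition oo_only_prefix (w : word) : Prop :=
  forall i, i.+1 < size w -> nth true w i = false -> nth true w i.+1 = false -> i = 0.

Definition good_C1 (l1 m : nat) (u : seq word) : Prop :=
  [/\ uniq u, size u = 2 ^ m,
      all (fun w => size w == l1) u,
      all (fun w => prefix [:: false; false; true] w) u &
      forall w, w \in u -> oo_only_prefix w].

(* P_j in 0-based positions: position p (1-based p+1) is in P_j iff
   p+1 = 2 or p+1 = i^2 with 2 <= i <= floor(sqrt N). *)
Definition inP (N p : nat) : bool :=
  (p.+1 == 2) || [exists i : 'I_(Nat.sqrt N).+1, (2 <= i) && (p.+1 == i * i)].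

Definition perm_word (u : seq word) (pi : {perm 'I_(size u)}) : word :=
  flatten [seq nth [::] u (pi i) | i <- enum 'I_(size u)].

Definition in_next (u : seq word) (w : word) : Prop :=
  exists pi : {perm 'I_(size u)},
    (forall i : 'I_(size u), ~~ inP (size u) i -> pi i = i) /\ w = perm_word pi.

Definition next_level (u v : seq word) : Prop :=
  [/\ uniq v, (forall w, w \in v <-> in_next u w) & nth [::] v 0 = flatten u].

(* Lengths: L C l1 j = l_{j+1} (0-based index j). *)
Fixpoint lens (C : nat -> seq word) (l1 j : nat) : nat :=
  match j with
  | 0 => l1
  | j'.+1 => lens C l1 j' * size (C j')
  end.

Definition window (x : int -> bool) (a : int) (n : nat) : word :=
  mkseq (fun i => x (a + i%:Z)%R) n.

Definition in_X (C : nat -> seq word) (x : int -> bool) : Prop :=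
  forall (a : int) (n : nat), exists j w, w \in C j /\ infix (window x a n) w.

From mathcomp Require Import all_boot all_order all_algebra all_fingroup zify ring.
From Stdlib Require Import Classical.
Import GRing.Theory Num.Theory.
Set Implicit Arguments.

(* Every word of C_(j+1) is a concatenation of C_j-words of common length l_j
   that starts with u_1^(j) and contains u_1^(j) at no other block, since the
   permutations fix position 1 and the u_i^(j) are distinct.  Uniqueness of the
   C_j-decomposition follows by induction on j: two C_(j+1)-decompositions are
   C_j-decompositions, hence shifted by a multiple of l_j; a shift that is not a
   multiple of l_(j+1) would put the leading block of one C_(j+1)-word at a
   non-leading block of another.  At level 1 the same role is played by the
   prefix 00, which occurs nowhere else.  Existence is a compactness argument:
   every finite window of x is a factor of a concatenation of C_j-words, which
   decomposes arbitrarily long stretches of x with an offset in [0, l_j); one of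
   these finitely many offsets serves arbitrarily long stretches, hence all of x. *)

Definition block (T : Type) (l : nat) (w : seq T) (t : nat) : seq T :=
  take l (drop (t * l) w).

Lemma size_flatten_uniform {T : Type} {l : nat} {s : seq (seq T)} :
  all (fun w => size w == l) s -> size (flatten s) = size s * l.
Proof.
by elim: s => //= w s IH /andP[/eqP sz_w /IH sz_s]; rewrite size_cat sz_w sz_s mulSn.
Qed.

Lemma block_flatten_uniform {T : Type} {l : nat} {s : seq (seq T)} {t : nat} :
  all (fun w => size w == l) s -> t < size s -> block l (flatten s) t = nth [::] s t.
Proof.
rewrite /block; elim: s t => //= w s IH [|t] /andP[/eqP sz_w sz_s] lt_t.
  by rewrite mul0n drop0 take_size_cat.
by rewrite mulSn drop_cat sz_w ltnNge leq_addr /= addKn IH.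
Qed.

Lemma infix_flatten_aligned {T : eqType} {l : nat} {s : seq (seq T)} {v : seq T} :
  0 < l -> all (fun w => size w == l) s -> infix v (flatten s) ->
  exists2 r, r < l &
    forall i, r + i.+1 * l <= size v -> take l (drop (r + i * l) v) \in s.
Proof.
move=> l_gt0 sz_s /infixP[s1 [s2 def_s]].
have [r lt_r [Q def_Q]] : exists2 r, r < l & exists Q, size s1 + r = Q * l.
  have := divn_eq (size s1) l; have := ltn_pmod (size s1) l_gt0.
  case: (posnP (size s1 %% l)) => [-> _ ->|mod_gt0 lt_mod ->].
    by exists 0 => //; exists (size s1 %/ l); rewrite !addn0.
  by exists (l - size s1 %% l); [lia | exists (size s1 %/ l).+1; nia].
exists r => // i fits.
have lt_Qi : Q + i < size s.
  rewrite -(ltn_pmul2r l_gt0) -(size_flatten_uniform sz_s) def_s !size_cat; nia.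
have := mem_nth [::] lt_Qi; rewrite -(block_flatten_uniform sz_s lt_Qi) /block.
rewrite mulnDl -def_Q -addnA addnC -drop_drop def_s drop_size_cat //.
by rewrite drop_cat ifT ?takel_cat ?size_drop //; nia.
Qed.

Lemma infix_flatten (T : eqType) (s : seq (seq T)) w : w \in s -> infix w (flatten s).
Proof.
by move=> /splitPr[s1 s2]; rewrite flatten_cat /=; apply/infix_catl/prefix_infix.
Qed.

Lemma prefix_001 (w : word) : prefix [:: false; false; true] w ->
  [/\ nth true w 0 = false, nth true w 1 = false, nth true w 2 = true & 2 < size w].
Proof. by case: w => [|[] [|[] [|[] w]]]. Qed.

Section Windows.

Variable x : int -> bool.

Lemma size_window a n : size (window x a n) = n.
Proof. exact: size_mkseq. Qed.

Lemma nth_window a n i b : i < n -> nth b (window x a n) i = x (a + i%:Z)%R.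
Proof. exact: nth_mkseq. Qed.

Lemma take_drop_window a n d k : d + k <= n ->
  take k (drop d (window x a n)) = window x (a + d%:Z)%R k.
Proof.
move=> fits; rewrite /window /mkseq -map_drop -map_take drop_iota take_iota.
rewrite (_ : minn k (n - d) = k); last lia.
rewrite add0n -[d]addn0 iotaDl -map_comp.
by apply: eq_map => i /=; rewrite addn0 PoszD addrA.
Qed.

End Windows.

Lemma int_edivn (k : int) {N : nat} : 0 < N ->
  exists q : int, exists2 t : nat, k = (q * N%:Z + t%:Z)%R & t < N.
Proof.
move=> N_gt0; exists (k %/ N)%Z, (absz (k %% N)%Z).
  have := divz_eq k N; have : (0 <= (k %% N)%Z)%R by apply: modz_ge0; lia.
  lia.
have : ((k %% N)%Z < N%:Z)%R by apply: ltz_pmod; lia.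
have : (0 <= (k %% N)%Z)%R by apply: modz_ge0; lia.
lia.
Qed.

Lemma uniform_counterexample {P : nat -> nat -> Prop} {b : nat} :
  (forall n n' r, n <= n' -> P n' r -> P n r) ->
  (forall r, r < b -> exists n, ~ P n r) -> exists N, forall r, r < b -> ~ P N r.
Proof.
move=> antiP; elim: b => [|b IH] fail_r; first by exists 0.
have [N failN] := IH (fun r lt_r => fail_r r (ltnW lt_r)).
have [n failn] := fail_r b (ltnSn b).
exists (maxn N n) => r; rewrite ltnS leq_eqVlt => /orP[/eqP-> | lt_r] Pr.
  by apply/failn/(antiP _ _ _ (leq_maxr N n) Pr).
exact/(failN r lt_r)/(antiP _ _ _ (leq_maxl N n) Pr).
Qed.

Lemma uniform_witness {P : nat -> nat -> Prop} {b : nat} :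
  (forall n n' r, n <= n' -> P n' r -> P n r) ->
  (forall n, exists2 r, r < b & P n r) -> exists2 r, r < b & forall n, P n r.
Proof.
move=> antiP witness; apply: NNPP => no_uniform.
have [|N failN] := @uniform_counterexample P b antiP.
  move=> r lt_r; apply: not_all_ex_not => Pr.
  exact: no_uniform (ex_intro2 _ _ r lt_r Pr).
by have [r lt_r] := witness N; apply: failN.
Qed.

Lemma inP_0 N : ~~ inP N 0.
Proof. by apply/orP => [[//|/existsP[i /andP[i_ge2 /eqP]]]]; nia. Qed.

Section Markers.

Variables (l1 m : nat) (C : nat -> seq word).
Hypothesis C1_good : good_C1 l1 m (C 0).
Hypothesis C_next : forall j, next_level (C j) (C j.+1).

Local Notation len := (lens C l1).

Lemma C_uniq j : uniq (C j).
Proof. by case: j => [|j]; [case: C1_good | case: (C_next j)]. Qed.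

Lemma mem_C_succ {j w} :
  w \in C j.+1 -> exists2 pi : {perm 'I_(size (C j))},
    (forall i : 'I_(size (C j)), ~~ inP (size (C j)) i -> pi i = i) & w = perm_word pi.
Proof. by case: (C_next j) => _ memC _ /memC[pi []]; exists pi. Qed.

Lemma all_perm_word {u : seq word} (pi : {perm 'I_(size u)}) {P : pred word} :
  all P u -> all P [seq nth [::] u (pi i) | i <- enum 'I_(size u)].
Proof. by move=> /allP Pu; rewrite all_map; apply/allP => i _; apply/Pu/mem_nth. Qed.

Lemma C_shape j :
  [/\ all (fun w => size w == len j) (C j), 0 < len j & 0 < size (C j)].
Proof.
case: C1_good => _ sizeC1 lenC1 prefC1 _.
elim: j => [|j [sz_j len_gt0 size_gt0]].
  have size_gt0 : 0 < size (C 0) by rewrite sizeC1 expn_gt0.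
  split => //=; case: (C 0) size_gt0 lenC1 prefC1 => // w u _ /andP[/eqP<- _].
  by case/andP => /prefix_001[_ _ _ /ltnW/ltnW].
have sz_succ : all (fun w => size w == len j.+1) (C j.+1).
  apply/allP => w /mem_C_succ[pi _ ->].
  rewrite /perm_word (size_flatten_uniform (all_perm_word pi sz_j)).
  by rewrite size_map size_enum_ord mulnC.
split => //; first by rewrite muln_gt0 len_gt0 size_gt0.
case: (C_next j) => _ _; case: (C j.+1) => // flat_nil.
move: (size_flatten_uniform sz_j); rewrite -flat_nil => /esym/eqP.
by rewrite muln_eq0 !gtn_eqF.
Qed.

Lemma size_C {j w} : w \in C j -> size w = len j.
Proof. by case: (C_shape j) => /allP sz _ _ /sz/eqP. Qed.

Lemma len_gt0 j : 0 < len j.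
Proof. by case: (C_shape j). Qed.

Lemma size_C_gt0 j : 0 < size (C j).
Proof. by case: (C_shape j). Qed.

Lemma block_C_succ {j w} : w \in C j.+1 ->
  exists2 pi : {perm 'I_(size (C j))}, forall t, (val (pi t) == 0) = (val t == 0) &
    forall t : 'I_(size (C j)), block (len j) w t = nth [::] (C j) (pi t).
Proof.
move=> /mem_C_succ[pi pi_fix ->]; exists pi.
  pose t0 := Ordinal (size_C_gt0 j).
  have pi_t0 : pi t0 = t0 by apply/pi_fix/inP_0.
  by move=> t; rewrite -[0]/(val t0) -{1}pi_t0 !(inj_eq val_inj) (inj_eq perm_inj).
move=> t; rewrite /perm_word block_flatten_uniform.
- by rewrite (nth_map t) ?size_enum_ord // nth_ord_enum.
- by apply: all_perm_word; apply/allP => v /size_C->.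
- by rewrite size_map size_enum_ord.
Qed.

Lemma mem_block_C_succ {j w t} :
  w \in C j.+1 -> t < size (C j) -> block (len j) w t \in C j.
Proof.
by move=> /block_C_succ[pi _ blockE] lt_t; rewrite (blockE (Ordinal lt_t)) mem_nth.
Qed.

Lemma block_C_succ_head {j w t} : w \in C j.+1 -> t < size (C j) ->
  (block (len j) w t == nth [::] (C j) 0) = (t == 0).
Proof.
move=> /block_C_succ[pi pi0 blockE] lt_t.
by rewrite (blockE (Ordinal lt_t)) -(pi0 (Ordinal lt_t)) nth_uniq ?C_uniq ?size_C_gt0.
Qed.

Lemma C_flatten {d j w} : w \in C (d + j) ->
  exists2 s : seq word, {subset s <= C j} & w = flatten s.
Proof.
elim: d w => [|d IH] w; first by exists [:: w] => [v /[!inE]/eqP->|]; rewrite /= ?cats0.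
rewrite addSn => /mem_C_succ[pi _ ->]; rewrite /perm_word.
have /allP : all (mem (C (d + j)))
    [seq nth [::] (C (d + j)) (pi i) | i <- enum 'I_(size (C (d + j)))].
  by apply: all_perm_word; apply/allP.
elim: [seq _ | i <- _] => [|v vs IHvs] /= mem_vs; first by exists [::].
have [s1 Cs1 ->] := IH v (mem_vs v (mem_head v vs)).
have [s2 Cs2 ->] : exists2 s2, {subset s2 <= C j} & flatten vs = flatten s2.
  by apply: IHvs => u vs_u; apply: mem_vs; rewrite inE vs_u orbT.
by exists (s1 ++ s2) => [u|]; rewrite ?flatten_cat // mem_cat => /orP[/Cs1|/Cs2].
Qed.

Lemma C_infix_up d {J w} : w \in C J -> exists2 w', w' \in C (d + J) & infix w w'.
Proof.
move=> CJw; elim: d => [|d [w' Cw' w_w']]; first by exists w; rewrite ?infix_refl.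
exists (flatten (C (d + J))); last exact/(infix_trans w_w')/infix_flatten.
by case: (C_next (d + J)) => _ _ <-; rewrite addSn mem_nth ?size_C_gt0.
Qed.

Lemma C_infix_flatten {J} j {w} : w \in C J ->
  exists2 s : seq word, {subset s <= C j} & infix w (flatten s).
Proof.
move=> /(C_infix_up j)[w' Cw' w_w']; rewrite addnC in Cw'.
by have [s Cs def_w'] := C_flatten Cw'; exists s; rewrite -?def_w'.
Qed.

Local Open Scope ring_scope.

Definition parses (x : int -> bool) j (r : int) :=
  forall k : int, window x (r + k * (len j)%:Z) (len j) \in C j.

Lemma parses_window {x j r} : parses x j r -> window x r (len j) \in C j.
Proof. by move=> /(_ 0); rewrite mul0r addr0. Qed.

Lemma parses_shift {x j r} q : parses x j r -> parses x j (r + q * (len j)%:Z).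
Proof. by move=> pr k; rewrite -addrA -mulrDl; apply: pr. Qed.

Lemma parses_pred {x j r} : parses x j.+1 r -> parses x j r.
Proof.
move=> pr k; have [q [t def_k lt_t]] := int_edivn k (size_C_gt0 j).
have := mem_block_C_succ (parses_window (parses_shift q pr)) lt_t.
rewrite /block take_drop_window /=; last by have := len_gt0 j; nia.
suff -> : r + k * (len j)%:Z = r + q * (len j.+1)%:Z + (t * len j)%N%:Z by exact: id.
by rewrite def_k /= !PoszM; ring.
Qed.

Lemma C0_window_head {x a} : window x a (len 0) \in C 0 ->
  [/\ x a = false, x (a + 1) = false & x (a + 2) = true].
Proof.
case: C1_good => _ _ _ /allP pref _ /pref/prefix_001[]; rewrite size_window => + + + lt2.
by rewrite !nth_window ?addr0 //; lia.
Qed.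

Lemma C0_window_00 {x a} {i : nat} : window x a (len 0) \in C 0 -> (i.+1 < len 0)%N ->
  x (a + i%:Z) = false -> x (a + i.+1%:Z) = false -> i = 0%N.
Proof.
case: C1_good => _ _ _ _ oo_prefix /oo_prefix/(_ i) + lt_i.
by rewrite size_window !nth_window //; [apply | lia].
Qed.

Lemma parses0_offset {x r r'} : parses x 0 r -> parses x 0 r' ->
  exists q, r' = r + q * (len 0)%:Z.
Proof.
move=> pr pr'; have [q [s def_d lt_s]] := int_edivn (r' - r) (len_gt0 0).
case: (posnP s) => [s0|s_gt0]; first by exists q; rewrite -(subrK r r') def_d s0; ring.
have pr_s : parses x 0 (r + s%:Z).
  by rewrite (_ : r + s%:Z = r' + (- q) * (len 0)%:Z); [apply: parses_shift | lia].
have [x_s x_s1 x_s2] := C0_window_head (parses_window pr_s).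
case: (ltnP s.+1 (len 0)) => [lt_s1 | le_s1].
  have := C0_window_00 (parses_window pr) lt_s1 x_s.
  by rewrite -addn1 PoszD addrA x_s1 => /(_ erefl); lia.
have [_ x_l1 _] := C0_window_head (pr 1).
by move: x_s2; rewrite (_ : r + s%:Z + 2 = r + 1 * (len 0)%:Z + 1) ?x_l1 //; lia.
Qed.

Lemma parses_succ_offset x j :
  (forall r r', parses x j r -> parses x j r' -> exists q, r' = r + q * (len j)%:Z) ->
  forall r r', parses x j.+1 r -> parses x j.+1 r' ->
  exists q, r' = r + q * (len j.+1)%:Z.
Proof.
move=> offset_j r r' pr pr'.
have [d def_r'] := offset_j _ _ (parses_pred pr) (parses_pred pr').
have [q [t def_d lt_t]] := int_edivn d (size_C_gt0 j).
case: (posnP t) => [t0|t_gt0].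
  by exists q; rewrite def_r' def_d t0 /= addr0 PoszM; ring.
have pr_t : parses x j.+1 (r + (t * len j)%N%:Z).
  rewrite (_ : r + _ = r' + (- q) * (len j.+1)%:Z); first exact: parses_shift.
  by rewrite def_r' def_d /= !PoszM; ring.
have := block_C_succ_head (parses_window pr) lt_t; rewrite gtn_eqF // => /negbT/eqP[].
have /= /eqP<- := block_C_succ_head (parses_window pr_t) (size_C_gt0 j).
by rewrite /block mul0n !take_drop_window ?addr0 //=; have := len_gt0 j; nia.
Qed.

Lemma parses_offset {x j r r'} : parses x j r -> parses x j r' ->
  exists q, r' = r + q * (len j)%:Z.
Proof.
elim: j r r' => [|j IH] r r'; [exact: parses0_offset | exact: parses_succ_offset].
Qed.

Definition parses_near x j n (r : nat) := forall k : int,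
  (`|k| < n)%N -> window x (r%:Z + k * (len j)%:Z) (len j) \in C j.

Lemma parses_near_antitone x j n n' r :
  (n <= n')%N -> parses_near x j n' r -> parses_near x j n r.
Proof. by move=> le_n near k lt_k; apply: near; apply: leq_trans le_n. Qed.

Lemma exists_parses_near {x} : in_X C x ->
  forall j n, exists2 r, (r < len j)%N & parses_near x j n r.
Proof.
move=> inX j n; have l_gt0 := len_gt0 j.
have [J [w [CJw win_w]]] := inX (- (n * len j)%N%:Z) (n.*2.+1 * len j)%N.
have [s Cs w_s] := C_infix_flatten j CJw.
have sz_s : all (fun v => size v == len j) s by apply/allP => v /Cs/size_C->.
have [r lt_r aligned] := infix_flatten_aligned l_gt0 sz_s (infix_trans win_w w_s).
rewrite size_window in aligned; exists r => // k lt_k.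
have fits : (r + (absz (k + n%:Z)%R).+1 * len j <= n.*2.+1 * len j)%N by nia.
have := Cs _ (aligned _ fits).
rewrite take_drop_window; last by move: fits; rewrite mulSn; lia.
have -> // : - (n * len j)%N%:Z + (r + absz (k + n%:Z)%R * len j)%N%:Z
           = r%:Z + k * (len j)%:Z.
rewrite PoszD !PoszM (_ : (absz (k + n%:Z)%R)%:Z = k + n%:Z); [ring | lia].
Qed.

Lemma exists_parses {x} : in_X C x -> forall j, exists2 r, (r < len j)%N & parses x j r%:Z.
Proof.
move=> inX j.
have [r lt_r near] := uniform_witness (@parses_near_antitone x j) (exists_parses_near inX j).
by exists r => // k; apply: (near `|k|.+1).
Qed.

End Markers.

Theorem lemma4p2 :
  exists L : nat, forall (l1 m : nat) (C : nat -> seq word),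
    L <= l1 -> l1 = m * m ->
    good_C1 l1 m (C 0) ->
    (forall j, next_level (C j) (C j.+1)) ->
    forall x : int -> bool, in_X C x ->
    forall j : nat,
      exists! r : nat, r < lens C l1 j /\
        forall k : int,
          window x (r%:Z + k * (lens C l1 j)%:Z)%R (lens C l1 j) \in C j.
Proof.
(* The argument needs no lower bound on l_1. *)
exists 0 => l1 m C _ _ C1_good C_next x inX j.
have [r lt_r pr] := exists_parses C1_good C_next inX j.
exists r; split=> // r' [lt_r' pr'].
have [q def_r'] := parses_offset C1_good C_next pr pr'.
by case: (ltrgtP q 0) => q0; nia.
Qed.
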